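(* Let $X=\{(x,s)\in\mathbb{R}^n\times\mathbb{R}^n : e^Tx=1,\ x-s\le0,\ -x-s\le0\}$, where $e=(1,\dots,1)^T$, and let $(a,b)\in\mathbb{R}^n\times\mathbb{R}^n$. Let $(x^*,s^* )=P_X(a,b)$ denote the Euclidean projection of $(a,b)$ onto $X$. Then $$x^*=\tfrac12\big(\max\{0,a+b-\mu e\}-\max\{0,b-a+\mu e\}\big),\qquad s^*=\tfrac12\big(\max\{0,b-a+\mu e\}+\max\{0,a+b-\mu e\}\big),$$ where the maxima are taken componentwise and $\mu\in\mathbb{R}$ is a root of $$t(u):=\sum_{i=1}^n\Big(\max\{0,a_i+b_i-u\}-\max\{0,b_i-a_i+u\}\Big)-2.$$ *)

From mathcomp Require Import all_boot all_order all_algebra.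
Set Implicit Arguments. Unset Strict Implicit. Unset Printing Implicit Defensive.
Import Order.TTheory GRing.Theory Num.Theory.
Local Open Scope ring_scope.

Definition inX (R : realFieldType) (n : nat) (x s : 'rV[R]_n) : Prop :=
  \sum_(i < n) x 0 i = 1 /\
  (forall i : 'I_n, x 0 i - s 0 i <= 0 /\ - x 0 i - s 0 i <= 0).

Definition sqdist (R : realFieldType) (n : nat) (x s a b : 'rV[R]_n) : R :=
  \sum_(i < n) ((x 0 i - a 0 i) ^+ 2 + (s 0 i - b 0 i) ^+ 2).

Definition is_projX (R : realFieldType) (n : nat) (a b x s : 'rV[R]_n) : Prop :=
  inX x s /\ forall x' s' : 'rV[R]_n, inX x' s' -> sqdist x s a b <= sqdist x' s' a b.

Definition tfun (R : realFieldType) (n : nat) (a b : 'rV[R]_n) (u : R) : R :=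
  \sum_(i < n) (Num.max 0 (a 0 i + b 0 i - u) - Num.max 0 (b 0 i - a 0 i + u)) - 2.

Definition xstar (R : realFieldType) (n : nat) (a b : 'rV[R]_n) (mu : R) : 'rV[R]_n :=
  \row_i (2^-1 * (Num.max 0 (a 0 i + b 0 i - mu) - Num.max 0 (b 0 i - a 0 i + mu))).

Definition sstar (R : realFieldType) (n : nat) (a b : 'rV[R]_n) (mu : R) : 'rV[R]_n :=
  \row_i (2^-1 * (Num.max 0 (b 0 i - a 0 i + mu) + Num.max 0 (a 0 i + b 0 i - mu))).

From mathcomp Require Import all_boot all_order all_algebra.
From mathcomp Require Import ring lra.
Set Implicit Arguments. Unset Strict Implicit. Unset Printing Implicit Defensive.
Import Order.TTheory GRing.Theory Num.Theory.
Local Open Scope ring_scope.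

(* The constraint e^T x = 1 gets the Lagrange multiplier mu; what remains
   splits into n planar problems, and the formula puts the i-th coordinates of
   the candidate point p at the projection of (a_i - mu, b_i) onto the cone
   {(x, s) : |x| <= s}.  The variational inequalities of these planar
   projections add up (the multiplier terms cancel since both points have
   coordinate sum 1, which is what t(mu) = 0 says) to the obtuse-angle
   inequality at p, whence |z - (a,b)|^2 >= |z - p|^2 + |p - (a,b)|^2 for every
   z in X. *)

Section ConeProjection.

Variable R : realFieldType.

Definition cone_proj_x (c d : R) : R :=
  2^-1 * (Num.max 0 (c + d) - Num.max 0 (d - c)).

Definition cone_proj_s (c d : R) : R :=
  2^-1 * (Num.max 0 (d - c) + Num.max 0 (c + d)).

Lemma cone_proj_mem (c d : R) :
  cone_proj_x c d - cone_proj_s c d <= 0 /\ - cone_proj_x c d - cone_proj_s c d <= 0.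
Proof.
rewrite /cone_proj_x /cone_proj_s.
by case: (leP 0 (c + d)); case: (leP 0 (d - c)) => *; split; lra.
Qed.

Lemma cone_proj_variational (c d x s : R) : x - s <= 0 -> - x - s <= 0 ->
  0 <= (x - cone_proj_x c d) * (cone_proj_x c d - c)
       + (s - cone_proj_s c d) * (cone_proj_s c d - d).
Proof.
rewrite /cone_proj_x /cone_proj_s => *.
by case: (leP 0 (c + d)); case: (leP 0 (d - c)) => *; nra.
Qed.

End ConeProjection.

Section SquaredDistance.

Variables (R : realFieldType) (n : nat).
Implicit Types x s y t a b : 'rV[R]_n.

Lemma sqdist_ge0 x s a b : 0 <= sqdist x s a b.
Proof. by apply: sumr_ge0 => i _; rewrite addr_ge0 ?sqr_ge0. Qed.

Lemma sqdist_eq0 x s y t : sqdist x s y t = 0 -> x = y /\ s = t.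
Proof.
move=> sum0.
have coord i : x 0 i = y 0 i /\ s 0 i = t 0 i.
  have sqr_sum_ge0 j : true -> 0 <= (x 0 j - y 0 j) ^+ 2 + (s 0 j - t 0 j) ^+ 2.
    by rewrite addr_ge0 ?sqr_ge0.
  have /eqP := psumr_eq0P sqr_sum_ge0 sum0 (i := i) isT.
  by rewrite paddr_eq0 ?sqr_ge0 // !sqrf_eq0 !subr_eq0 => /andP[/eqP -> /eqP ->].
by split; apply/rowP => i; case: (coord i).
Qed.

Lemma sqdist_expand x s y t a b :
  sqdist x s a b = sqdist x s y t + sqdist y t a b
    + 2 * \sum_(i < n) ((x 0 i - y 0 i) * (y 0 i - a 0 i)
                        + (s 0 i - t 0 i) * (t 0 i - b 0 i)).
Proof. by rewrite /sqdist mulr_sumr -!big_split; apply: eq_bigr => i _ /=; ring. Qed.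

Lemma sqdist_obtuse x s y t a b :
  0 <= \sum_(i < n) ((x 0 i - y 0 i) * (y 0 i - a 0 i)
                     + (s 0 i - t 0 i) * (t 0 i - b 0 i)) ->
  sqdist x s y t + sqdist y t a b <= sqdist x s a b.
Proof. by move=> ge0; rewrite (sqdist_expand x s y t a b) lerDl mulr_ge0. Qed.

End SquaredDistance.

Section ProjectionFormula.

Variables (R : realFieldType) (n : nat) (a b : 'rV[R]_n) (mu : R).
Hypothesis t_mu : tfun a b mu = 0.

Lemma xstarE i : xstar a b mu 0 i = cone_proj_x (a 0 i - mu) (b 0 i).
Proof. by rewrite mxE /cone_proj_x; congr (_ * (Num.max 0 _ - Num.max 0 _)); ring. Qed.

Lemma sstarE i : sstar a b mu 0 i = cone_proj_s (a 0 i - mu) (b 0 i).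
Proof. by rewrite mxE /cone_proj_s; congr (_ * (Num.max 0 _ + Num.max 0 _)); ring. Qed.

Lemma sum_xstar : \sum_(i < n) xstar a b mu 0 i = 1.
Proof.
under eq_bigr => i _ do rewrite mxE.
move/eqP: t_mu; rewrite /tfun subr_eq0 -mulr_sumr => /eqP ->.
by rewrite mulVf // pnatr_eq0.
Qed.

Lemma inX_star : inX (xstar a b mu) (sstar a b mu).
Proof.
split=> [|i]; first exact: sum_xstar.
by rewrite xstarE sstarE; exact: cone_proj_mem.
Qed.

Lemma star_obtuse x s : inX x s ->
  0 <= \sum_(i < n) ((x 0 i - xstar a b mu 0 i) * (xstar a b mu 0 i - a 0 i)
                     + (s 0 i - sstar a b mu 0 i) * (sstar a b mu 0 i - b 0 i)).
Proof.
move=> [sum_x cone_xs].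
set xs := xstar a b mu; set ss := sstar a b mu.
have multiplier_terms : \sum_(i < n) mu * (x 0 i - xs 0 i) = 0.
  by rewrite -mulr_sumr sumrB sum_x sum_xstar subrr mulr0.
rewrite -[X in 0 <= X]addr0 -[X in _ + X]multiplier_terms -big_split /=.
apply: sumr_ge0 => i _; have [x_le_s nx_le_s] := cone_xs i.
have := cone_proj_variational (a 0 i - mu) (b 0 i) x_le_s nx_le_s.
by rewrite /xs /ss xstarE sstarE; nra.
Qed.

End ProjectionFormula.

Theorem mainTheorem7 (R : realFieldType) (n : nat) (a b : 'rV[R]_n) (mu : R) :
  tfun a b mu = 0 ->
  is_projX a b (xstar a b mu) (sstar a b mu) /\
  (forall x s : 'rV[R]_n, is_projX a b x s -> x = xstar a b mu /\ s = sstar a b mu).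
Proof.
move=> t_mu; have inXs := inX_star t_mu.
have gap x s : inX x s ->
    sqdist x s (xstar a b mu) (sstar a b mu) + sqdist (xstar a b mu) (sstar a b mu) a b
    <= sqdist x s a b.
  by move=> inXxs; apply/sqdist_obtuse/star_obtuse.
split; first by split=> // x s /gap; apply: le_trans; rewrite lerDr sqdist_ge0.
move=> x s [inXxs minimal]; apply: sqdist_eq0; apply/eqP.
rewrite eq_le sqdist_ge0 andbT.
by have := gap x s inXxs; have := minimal _ _ inXs; lra.
Qed.
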